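(* Let $(L,[\cdot,\cdot],\alpha)$ be a Hom-Lie algebra over a field $F$ and let $\mu:L\to[0,1]$ be a fuzzy subset of $L$. Then the following are equivalent: (i) $\mu$ is a fuzzy Hom-Lie subalgebra of $L$; (ii) for every $t\in\mathrm{Im}(\mu)$ such that the strong upper level set $U(\mu^>,t)=\{x\in L:\mu(x)>t\}$ is nonempty, $U(\mu^>,t)$ is a Hom-Lie subalgebra of $L$.
   Context: A Hom-Lie algebra over $F$ is a triple $(L,[\cdot,\cdot],\alpha)$ with $L$ an $F$-vector space, $\alpha:L\to L$ linear and $[\cdot,\cdot]:L\times L\to L$ bilinear, such that $[x,y]=-[y,x]$ and $[\alpha(x),[y,z]]+[\alpha(y),[z,x]]+[\alpha(z),[x,y]]=0$ for all $x,y,z\in L$. A Hom-Lie subalgebra is a subspace $H$ with $\alpha(H)\subseteq H$ and $[x,y]\in H$ for all $x,y\in H$. A fuzzy subset of $L$ is a map $\mu:L\to[0,1]$. Writing $a\wedge b=\min\{a,b\}$, $\mu$ is a fuzzy Hom-Lie subalgebra if for all $x,y\in L$, $c\in F$: $\mu(x+y)\ge\mu(x)\wedge\mu(y)$, $\mu(cx)\ge\mu(x)$, $\mu([x,y])\ge\mu(x)\wedge\mu(y)$, and $\mu(\alpha(x))\ge\mu(x)$. *)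

From HB Require Import structures.
From mathcomp Require Import all_boot all_order all_algebra.
From mathcomp Require Import reals.
Set Implicit Arguments. Unset Strict Implicit. Unset Printing Implicit Defensive.
Import Order.TTheory GRing.Theory Num.Theory.
Local Open Scope ring_scope.

Section HomLie.
Variables (F : fieldType) (L : lmodType F).

Definition bilinear_bracket (br : L -> L -> L) : Prop :=
  (forall (a : F) (x y z : L), br (a *: x + y) z = a *: br x z + br y z) /\
  (forall (a : F) (x y z : L), br x (a *: y + z) = a *: br x y + br x z).

Definition is_HomLie (br : L -> L -> L) (alpha : {linear L -> L}) : Prop :=
  bilinear_bracket br /\
  (forall x y, br x y = - br y x) /\
  (forall x y z, br (alpha x) (br y z) + br (alpha y) (br z x)
                 + br (alpha z) (br x y) = 0).

Definition is_subspace (H : L -> Prop) : Prop :=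
  H 0 /\ (forall x y, H x -> H y -> H (x + y)) /\
  (forall (c : F) x, H x -> H (c *: x)).

Definition HomLie_subalgebra (br : L -> L -> L) (alpha : {linear L -> L})
  (H : L -> Prop) : Prop :=
  is_subspace H /\ (forall x, H x -> H (alpha x)) /\
  (forall x y, H x -> H y -> H (br x y)).

Definition fuzzy_HomLie_subalgebra (R : realType) (br : L -> L -> L)
  (alpha : {linear L -> L}) (mu : L -> R) : Prop :=
  (forall x y, Num.min (mu x) (mu y) <= mu (x + y)) /\
  (forall (c : F) x, mu x <= mu (c *: x)) /\
  (forall x y, Num.min (mu x) (mu y) <= mu (br x y)) /\
  (forall x, mu x <= mu (alpha x)).

Definition strong_level (R : realType) (mu : L -> R) (t : R) : L -> Prop :=
  fun x => t < mu x.

End HomLie.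

(* Both directions come from one observation about the strong level sets of
   [mu]: [min (mu x) (mu y) <= mu z] holds iff every [U(mu^>, t)] containing
   [x] and [y] contains [z]. *)

From HB Require Import structures.
From mathcomp Require Import all_boot all_order all_algebra.
From mathcomp Require Import reals.
Import Order.TTheory GRing.Theory Num.Theory.
Local Open Scope ring_scope.

Section StrongLevelSets.
Variables (R : realType) (F : fieldType) (L : lmodType F) (mu : L -> R).

Lemma strong_level_min_closed t x y z :
  Num.min (mu x) (mu y) <= mu z ->
  strong_level mu t x -> strong_level mu t y -> strong_level mu t z.
Proof. by move=> le_z tx ty; apply: lt_le_trans le_z; rewrite lt_min tx ty. Qed.

Lemma strong_level_le_closed t x z :
  mu x <= mu z -> strong_level mu t x -> strong_level mu t z.
Proof. by move=> le_z tx; apply: lt_le_trans le_z. Qed.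

Lemma min_le_of_strong_level x y z :
  (forall t, (exists w, mu w = t) -> (exists w, t < mu w) ->
     strong_level mu t x -> strong_level mu t y -> strong_level mu t z) ->
  Num.min (mu x) (mu y) <= mu z.
Proof.
move=> closed; rewrite leNgt lt_min; apply/negP => /andP[zx zy].
have := closed (mu z) (ex_intro _ z erefl) (ex_intro _ x zx) zx zy.
by rewrite /strong_level ltxx.
Qed.

Lemma le_of_strong_level x z :
  (forall t, (exists w, mu w = t) -> (exists w, t < mu w) ->
     strong_level mu t x -> strong_level mu t z) ->
  mu x <= mu z.
Proof.
move=> closed; rewrite -[mu x]minxx.
by apply: min_le_of_strong_level => t im ne tx _; apply: closed.
Qed.

End StrongLevelSets.

Theorem theorem4p3 (R : realType) (F : fieldType) (L : lmodType F)
  (br : L -> L -> L) (alpha : {linear L -> L}) (mu : L -> R) :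
  is_HomLie br alpha ->
  (forall x, 0 <= mu x <= 1) ->
  (fuzzy_HomLie_subalgebra br alpha mu <->
   (forall t : R, (exists x, mu x = t) -> (exists x, t < mu x) ->
      HomLie_subalgebra br alpha (strong_level mu t))).
Proof.
move=> _ _; split.
- case=> [addP [scaleP [brP alphaP]]] t _ [x0 t_x0].
  split; [split; [|split] | split].
  + by apply: strong_level_le_closed t_x0; rewrite -(scale0r x0).
  + by move=> x y; apply: strong_level_min_closed.
  + by move=> c x; apply: strong_level_le_closed.
  + by move=> x; apply: strong_level_le_closed.
  + by move=> x y; apply: strong_level_min_closed.
- move=> levels; split; [|split; [|split]].
  + move=> x y; apply: min_le_of_strong_level => t im ne.
    by have [[_ [addU _]] _] := levels t im ne; apply: addU.
  + move=> c x; apply: le_of_strong_level => t im ne.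
    by have [[_ [_ scaleU]] _] := levels t im ne; apply: scaleU.
  + move=> x y; apply: min_le_of_strong_level => t im ne.
    by have [_ [_ brU]] := levels t im ne; apply: brU.
  + move=> x; apply: le_of_strong_level => t im ne.
    by have [_ [alphaU _]] := levels t im ne; apply: alphaU.
Qed.
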